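(* Let $X$ be a Banach space, $H$ a Hilbert space, $S\in\mathcal{L}(X,H)$, $F\subset X$ convex and $n\in\mathbb{N}_0$. Then $c_n(S,F)\le(n+1)\,b_n(S,F)$. If $F$ is additionally symmetric, then $c_n(S,F)\le\sqrt{n+1}\,b_n(S,F)$.
   Context: Gelfand numbers: $c_n(S,F)=\inf_{L_1,\dots,L_n\in X'}\sup\{\tfrac12\|S(f)-S(g)\|: f,g\in F,\ L_k(f)=L_k(g)\ \forall k\le n\}$. Bernstein numbers: $b_n(S,F)$ is the supremum of all $r>0$ for which there exist an $(n+1)$-dimensional linear subspace $V\subset X$ on which $S$ is injective and $g\in F$ with $g+\{v\in V:\|Sv\|\le r\}\subset F$ (supremum of the empty set is $0$). *)

From HB Require Import structures.
From mathcomp Require Import all_boot all_order all_algebra.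
From mathcomp Require Import all_classical all_reals all_analysis.
Set Implicit Arguments. Unset Strict Implicit. Unset Printing Implicit Defensive.
Import Order.TTheory GRing.Theory Num.Theory.
Import numFieldNormedType.Exports.
Local Open Scope classical_set_scope.
Local Open Scope ring_scope.

Section Defs.
Variable R : realType.

Definition is_linear (X Y : lmodType R) (f : X -> Y) : Prop :=
  forall (a : R) (x y : X), f (a *: x + y) = a *: f x + f y.

Definition bounded_linear (X Y : normedModType R) (f : X -> Y) : Prop :=
  is_linear f /\ continuous f.

Definition dual_elt (X : normedModType R) (L : X -> R^o) : Prop :=
  bounded_linear L.

(* a (real) Hilbert space: a complete normed space whose norm comes from
   an inner product ip *)
Definition is_inner_product (H : normedModType R) (ip : H -> H -> R) : Prop :=
  [/\ forall x y, ip x y = ip y x,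
      forall a x y z, ip (a *: x + y) z = a * ip x z + ip y z
    & forall x, `|x| ^+ 2 = ip x x].

Definition convex (X : lmodType R) (F : set X) : Prop :=
  forall x y (t : R), F x -> F y -> 0 <= t -> t <= 1 ->
    F (t *: x + (1 - t) *: y).

Definition symmetric_set (X : lmodType R) (F : set X) : Prop :=
  forall x, F x -> F (- x).

Definition gelfand_radius (X H : normedModType R) (S : X -> H) (F : set X)
    (n : nat) (L : 'I_n -> X -> R) : \bar R :=
  ereal_sup [set ((`|S fg.1 - S fg.2| / 2)%:E) | fg in
     [set fg : X * X | F fg.1 /\ F fg.2 /\ forall k, L k fg.1 = L k fg.2]].

Definition gelfand_number (X H : normedModType R) (S : X -> H) (F : set X)
    (n : nat) : \bar R :=
  ereal_inf [set gelfand_radius S F L | L in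
     [set L : 'I_n -> X -> R | forall k, dual_elt (L k)]].

Definition span_of (X : lmodType R) (m : nat) (e : 'I_m -> X) : set X :=
  [set v | exists c : 'I_m -> R, v = \sum_(i < m) c i *: e i].

Definition lin_indep (X : lmodType R) (m : nat) (e : 'I_m -> X) : Prop :=
  forall c : 'I_m -> R, \sum_(i < m) c i *: e i = 0 -> forall i, c i = 0.

Definition bernstein_admissible (X H : normedModType R) (S : X -> H)
    (F : set X) (n : nat) (r : R) : Prop :=
  0 < r /\
  exists e : 'I_n.+1 -> X,
    lin_indep e /\
    {in span_of e &, injective S} /\
    exists g, F g /\
      forall v, span_of e v -> `|S v| <= r -> F (g + v).

Definition bernstein_number (X H : normedModType R) (S : X -> H)
    (F : set X) (n : nat) : \bar R :=
  ereal_sup ([set r%:E | r in bernstein_admissible S F n] `|` [set 0%E]).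

End Defs.

From HB Require Import structures.
From mathcomp Require Import all_boot all_order all_algebra.
From mathcomp Require Import all_classical all_reals all_analysis.
From mathcomp Require Import ring lra.
Import Order.TTheory GRing.Theory Num.Theory.
Import numFieldNormedType.Exports.
Local Open Scope classical_set_scope.
Local Open Scope ring_scope.
Set Implicit Arguments. Unset Strict Implicit. Unset Printing Implicit Defensive.

(* If c_n(S,F) > rho, no n functionals separate F well enough: testing against the
   functionals x |-> <S x, S f_j - S g_j> of the pairs found so far yields a new pair
   f, g in F whose S-difference has half-norm > rho and is orthogonal to all previous
   ones.  After n+1 steps the half-differences e_i = (f_i - g_i)/2 have orthogonal
   images of norm > rho, so by Pythagoras |S (sum c_i e_i)| >= rho |c_i| and
   >= rho (sum c_i^2)^(1/2).  Averaging the segments [g_i, f_i] shows that F contains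
   the S-ball of radius rho/(n+1) in span(e_i) around the mean of the midpoints; if F
   is symmetric, the points +-e_i lie in F and Cauchy-Schwarz bounds sum |c_i| by 1
   on the S-ball of radius rho/sqrt(n+1) around 0. *)

Section LinearMaps.
Variables (R : realType) (X Y : lmodType R) (f : X -> Y).
Hypothesis f_lin : is_linear f.

Lemma is_linearD x y : f (x + y) = f x + f y.
Proof. by have := f_lin 1 x y; rewrite !scale1r. Qed.

Lemma is_linear0 : f 0 = 0.
Proof. by apply: (addrI (f 0)); rewrite addr0 -is_linearD addr0. Qed.

Lemma is_linearZ a x : f (a *: x) = a *: f x.
Proof. by have := f_lin a x 0; rewrite !addr0 is_linear0 addr0. Qed.

Lemma is_linearB x y : f (x - y) = f x - f y.
Proof. by rewrite is_linearD -scaleN1r is_linearZ scaleN1r. Qed.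

Lemma is_linear_sum m (c : 'I_m -> R) (e : 'I_m -> X) :
  f (\sum_(i < m) c i *: e i) = \sum_(i < m) c i *: f (e i).
Proof.
rewrite (big_morph f is_linearD is_linear0).
by apply: eq_bigr => i _; rewrite is_linearZ.
Qed.

End LinearMaps.

Section InnerProduct.
Variables (R : realType) (H : normedModType R) (ip : H -> H -> R).
Hypothesis ip_inner : is_inner_product ip.

Lemma ipC x y : ip x y = ip y x.
Proof. by case: ip_inner => ->. Qed.

Lemma ip_normE x : `|x| ^+ 2 = ip x x.
Proof. by case: ip_inner => _ _ ->. Qed.

Lemma ip_linearl z : is_linear (fun x : H => ip x z : R^o).
Proof. by case: ip_inner => _ ipD _ a x y; rewrite ipD. Qed.

Lemma ipDl x y z : ip (x + y) z = ip x z + ip y z.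
Proof. exact: is_linearD (ip_linearl z) x y. Qed.

Lemma ipBl x y z : ip (x - y) z = ip x z - ip y z.
Proof. exact: is_linearB (ip_linearl z) x y. Qed.

Lemma ip_linearr z : is_linear (fun x : H => ip z x : R^o).
Proof. by move=> a x y; rewrite !(ipC z) ip_linearl. Qed.

Lemma norm_sum_orthogonal m (c : 'I_m -> R) (d : 'I_m -> H) :
  (forall i j, i != j -> ip (d i) (d j) = 0) ->
  `|\sum_(i < m) c i *: d i| ^+ 2 = \sum_(i < m) c i ^+ 2 * `|d i| ^+ 2.
Proof.
move=> d_orth; rewrite ip_normE.
have /= -> := is_linear_sum (ip_linearl (\sum_(i < m) c i *: d i)) c d.
apply: eq_bigr => i _; have /= -> := is_linear_sum (ip_linearr (d i)) c d.
rewrite (bigD1 i) //= big1 ?addr0 => [|j ji]; last by rewrite d_orth 1?eq_sym ?scaler0.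
by rewrite -ip_normE /GRing.scale /= mulrA expr2.
Qed.

Lemma ip_polarization x y : ip x y = 4^-1 * (`|x + y| ^+ 2 - `|x - y| ^+ 2).
Proof.
rewrite !ip_normE ipDl ipBl !(ipC _ (x + y)) !(ipC _ (x - y)) ipDl ipBl ipDl ipBl.
rewrite (ipC y x).
by field.
Qed.

Lemma ip_continuousl y : continuous (fun x => ip x y).
Proof.
have norm_shift_cont (z : H) : continuous (fun x : H => `|x + z|).
  move=> x; apply: (continuous_comp (f := fun x => x + z)); last exact: norm_continuous.
  by apply: continuousD; [exact: cvg_id | exact: cst_continuous].
rewrite (_ : (fun x => ip x y) =
    (fun x => 4^-1 * (`|x + y| * `|x + y| - `|x + - y| * `|x + - y|))).
  move=> x; have cD := norm_shift_cont y x; have cB := norm_shift_cont (- y) x.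
  have c4 : {for x, continuous (fun=> 4^-1 : R)} by exact: cst_continuous.
  exact (continuousM c4 (continuousB (continuousM cD cD) (continuousM cB cB))).
by apply/funext => x; rewrite ip_polarization !expr2.
Qed.

End InnerProduct.

Lemma sqr_sum_le (R : realFieldType) m (a : 'I_m -> R) :
  (\sum_(i < m) a i) ^+ 2 <= m%:R * \sum_(i < m) a i ^+ 2.
Proof.
case: m a => [|m] a; first by rewrite !big_ord0 expr0n mul0r.
set s := \sum_(i < m.+1) a i; set q := \sum_(i < m.+1) a i ^+ 2.
have m_gt0 : 0 < m.+1%:R :> R by rewrite ltr0n.
pose mean := s / m.+1%:R.
have variance_expand :
    \sum_(i < m.+1) (a i - mean) ^+ 2 = q - 2 * mean * s + m.+1%:R * mean ^+ 2.
  rewrite (eq_bigr (fun i => a i ^+ 2 - 2 * mean * a i + mean ^+ 2)) => [|i _]; last by ring.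
  by rewrite big_split sumrB -mulr_sumr sumr_const card_ord /= -/q -/s; ring.
have : 0 <= m.+1%:R * \sum_(i < m.+1) (a i - mean) ^+ 2.
  by rewrite mulr_ge0 ?ler0n ?sumr_ge0 // => i _; apply: sqr_ge0.
rewrite variance_expand (_ : _ * _ = m.+1%:R * q - s ^+ 2) ?subr_ge0 //.
by rewrite /mean; field; rewrite gt_eqF.
Qed.

Section Convexity.
Variables (R : realType) (X : lmodType R) (F : set X).
Hypothesis F_convex : convex F.

Lemma convex_sum m (w : 'I_m -> R) (p : 'I_m -> X) :
  (forall i, 0 <= w i) -> \sum_(i < m) w i <= 1 -> (\sum_(i < m) w i < 1 -> F 0) ->
  (forall i, F (p i)) -> F (\sum_(i < m) w i *: p i).
Proof.
elim: m w p => [|m IH] w p w_ge0 w_le1 F0 Fp.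
  by rewrite big_ord0; apply: F0; rewrite big_ord0 ltr01.
rewrite big_ord_recr /=; rewrite big_ord_recr /= in w_le1 F0.
set w' := fun i : 'I_m => w (widen_ord (leqnSn m) i).
set p' := fun i : 'I_m => p (widen_ord (leqnSn m) i).
set wm := w ord_max in w_le1 F0 *; set s := \sum_(i < m) w' i in w_le1 F0 *.
have s_ge0 : 0 <= s by apply: sumr_ge0 => i _; apply: w_ge0.
have [wm1|wm_neq1] := eqVneq wm 1.
  have s0 : s = 0 by apply/eqP; rewrite eq_le s_ge0 andbT; move: w_le1; rewrite wm1; lra.
  rewrite big1 => [|i _]; first by rewrite add0r wm1 scale1r.
  by rewrite (psumr_eq0P (fun j _ => w_ge0 _) s0) ?scale0r.
have t_gt0 : 0 < 1 - wm by rewrite subr_gt0 lt_neqAle wm_neq1 /=; lra.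
have -> : \sum_(i < m) w' i *: p' i = (1 - wm) *: \sum_(i < m) (w' i / (1 - wm)) *: p' i.
  by rewrite scaler_sumr; apply: eq_bigr => i _; rewrite scalerA mulrC divfK ?gt_eqF.
have sum_scaled : \sum_(i < m) w' i / (1 - wm) = s / (1 - wm) by rewrite mulr_suml.
rewrite addrC; apply: F_convex; [exact: Fp | | exact: w_ge0 | lra].
apply: IH => [i|||i]; last exact: Fp.
- by apply: divr_ge0; [apply: w_ge0 | apply: ltW].
- by rewrite sum_scaled ler_pdivrMr // mul1r; lra.
- by rewrite sum_scaled ltr_pdivrMr // mul1r => s_lt; apply: F0; lra.
Qed.

Lemma convex_midpoint_shift x y s : F x -> F y -> `|s| <= 1 ->
  F (2^-1 *: (x + y) + s *: (2^-1 *: (x - y))).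
Proof.
move=> Fx Fy; rewrite ler_norml => /andP [s_ge s_le].
rewrite scalerA scalerDr scalerBr addrACA -scalerDl -scalerBl.
rewrite (_ : 2^-1 - s * 2^-1 = 1 - (2^-1 + s * 2^-1)); last by field.
by apply: F_convex => //; lra.
Qed.

Hypothesis F_sym : symmetric_set F.

Lemma convex_symmetric0 x : F x -> F 0.
Proof.
move=> Fx; have -> : (0 : X) = 2^-1 *: x + (1 - 2^-1) *: - x.
  by rewrite (_ : 1 - 2^-1 = 2^-1 :> R) ?scalerN ?subrr //; field.
by apply: F_convex => //; [exact: F_sym | lra].
Qed.

Lemma convex_symmetric_sum m (c : 'I_m -> R) (p : 'I_m -> X) :
  F 0 -> (forall i, F (p i)) -> \sum_(i < m) `|c i| <= 1 ->
  F (\sum_(i < m) c i *: p i).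
Proof.
move=> F0 Fp c_le1.
have -> : \sum_(i < m) c i *: p i =
    \sum_(i < m) `|c i| *: (if 0 <= c i then p i else - p i).
  apply: eq_bigr => i _; case: ifPn => [c_ge0|]; first by rewrite ger0_norm.
  by rewrite -ltNge => c_lt0; rewrite ltr0_norm // scaleNr scalerN opprK.
apply: convex_sum => // i; case: ifP => _; [exact: Fp | exact/F_sym/Fp].
Qed.

End Convexity.

Lemma gelfand_number_le_radius (R : realType) (X H : normedModType R) (S : X -> H)
    (F : set X) n (L : 'I_n -> X -> R) :
  (forall k, dual_elt (L k)) -> (gelfand_number S F n <= gelfand_radius S F L)%E.
Proof. by move=> L_dual; apply: ge_ereal_inf; exists (gelfand_radius S F L) => //; exists L. Qed.

Section OrthogonalPairs.
Variables (R : realType) (X H : normedModType R) (ip : H -> H -> R).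
Variables (S : X -> H) (F : set X).
Hypotheses (ip_inner : is_inner_product ip) (S_lin : is_linear S).

Definition orthogonal_pairs (rho : R) (k : nat) (f g : nat -> X) : Prop :=
  (forall i, (i < k)%N -> [/\ F (f i), F (g i) & rho < `|S (f i) - S (g i)| / 2]) /\
  (forall i j, (j < i < k)%N -> ip (S (f i) - S (g i)) (S (f j) - S (g j)) = 0).

Lemma dual_elt_ipS h : continuous S -> dual_elt (fun x => ip (S x) h : R^o).
Proof.
move=> S_cont; split; first by move=> a x y; rewrite S_lin ip_linearl.
move=> x; exact (continuous_comp (S_cont x) (ip_continuousl (y := h) (x := S x) ip_inner)).
Qed.

Lemma orthogonal_pairs_extend n rho k f g : continuous S ->
  (forall L : 'I_n -> X -> R, (forall j, dual_elt (L j)) ->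
     (rho%:E < gelfand_radius S F L)%E) ->
  (k <= n)%N -> orthogonal_pairs rho k f g ->
  exists f' g', orthogonal_pairs rho k.+1 f' g'.
Proof.
move=> S_cont radius_gt k_le_n [pairs_in pairs_orth].
pose L (j : 'I_n) x : R^o := ip (S x) (S (f j) - S (g j)).
have /ereal_sup_gt [_ [[a b] [Fa [Fb Lab]] <-]] :=
  radius_gt L (fun j => dual_elt_ipS _ S_cont).
rewrite lte_fin => ab_gt /=.
exists (fun i => if i == k then a else f i), (fun i => if i == k then b else g i).
split=> [i|i j].
  rewrite ltnS leq_eqVlt => /orP [/eqP ->|ik]; first by rewrite eqxx.
  by rewrite (ltn_eqF ik); apply: pairs_in.
rewrite ltnS => /andP [ji]; rewrite leq_eqVlt => /orP [/eqP ik|ik].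
  subst i; rewrite eqxx (ltn_eqF ji).
  rewrite (ipBl ip_inner); have := Lab (Ordinal (leq_trans ji k_le_n)).
  by rewrite /L /= => ->; rewrite subrr.
rewrite (ltn_eqF ik) (ltn_eqF (ltn_trans ji ik)); apply: pairs_orth.
by rewrite ji.
Qed.

Lemma exists_orthogonal_pairs n rho : continuous S ->
  (rho%:E < gelfand_number S F n)%E ->
  exists f g, orthogonal_pairs rho n.+1 f g.
Proof.
move=> S_cont gelfand_gt.
have radius_gt (L : 'I_n -> X -> R) :
    (forall j, dual_elt (L j)) -> (rho%:E < gelfand_radius S F L)%E.
  by move=> L_dual; exact: lt_le_trans gelfand_gt (gelfand_number_le_radius S F L_dual).
suff: forall k, (k <= n.+1)%N -> exists f g, orthogonal_pairs rho k f g by apply.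
elim=> [_|k IH k_le].
  by exists (fun=> 0), (fun=> 0); split=> [i|i j]; rewrite ltn0 ?andbF.
have [f [g pairs]] := IH (ltnW k_le).
exact: orthogonal_pairs_extend S_cont radius_gt k_le pairs.
Qed.

End OrthogonalPairs.

Section BernsteinSubspace.
Variables (R : realType) (X H : normedModType R) (ip : H -> H -> R).
Variables (S : X -> H) (F : set X) (n : nat) (rho : R) (f g : nat -> X).
Hypotheses (ip_inner : is_inner_product ip) (S_lin : is_linear S) (rho_gt0 : 0 < rho).
Hypothesis pairs : orthogonal_pairs ip S F rho n.+1 f g.

Let e (i : 'I_n.+1) : X := 2^-1 *: (f i - g i).

Let span_sum (c : 'I_n.+1 -> R) : X := \sum_(i < n.+1) c i *: e i.

Lemma S_half_diffE i : S (e i) = 2^-1 *: (S (f i) - S (g i)).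
Proof. by rewrite is_linearZ // is_linearB. Qed.

Lemma norm_S_half_diff_gt i : rho < `|S (e i)|.
Proof.
rewrite S_half_diffE normrZ ger0_norm ?invr_ge0 ?ler0n // mulrC.
by case: pairs => /(_ i (ltn_ord i)) [].
Qed.

Lemma S_half_diff_orthogonal i j : i != j -> ip (S (e i)) (S (e j)) = 0.
Proof.
have ip_half_diff (k l : 'I_n.+1) : (l < k)%N -> ip (S (e k)) (S (e l)) = 0.
  move=> lk; rewrite !S_half_diffE.
  rewrite (is_linearZ (ip_linearl ip_inner _)) (is_linearZ (ip_linearr ip_inner _)) /=.
  by case: pairs => _ ->; rewrite ?scaler0 // lk ltn_ord.
rewrite neq_ltn => /orP [ij|ji]; last exact: ip_half_diff.
by rewrite (ipC ip_inner); apply: ip_half_diff.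
Qed.

Lemma norm_S_span_sum c :
  `|S (span_sum c)| ^+ 2 = \sum_(i < n.+1) c i ^+ 2 * `|S (e i)| ^+ 2.
Proof.
rewrite /span_sum is_linear_sum //.
exact: (norm_sum_orthogonal ip_inner c (d := fun i => S (e i))) S_half_diff_orthogonal.
Qed.

Lemma sum_sqr_coef_le c :
  (\sum_(i < n.+1) c i ^+ 2) * rho ^+ 2 <= `|S (span_sum c)| ^+ 2.
Proof.
rewrite norm_S_span_sum mulr_suml; apply: ler_sum => i _.
rewrite ler_wpM2l ?sqr_ge0 // ler_sqr ?nnegrE ?normr_ge0 ?(ltW rho_gt0) //.
exact/ltW/norm_S_half_diff_gt.
Qed.

Lemma abs_coef_le c i : `|c i| * rho <= `|S (span_sum c)|.
Proof.
rewrite -ler_sqr ?nnegrE ?normr_ge0 ?mulr_ge0 ?(ltW rho_gt0) //=.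
rewrite exprMn real_normK ?num_real //.
apply: le_trans (sum_sqr_coef_le c); rewrite ler_wpM2r ?sqr_ge0 //.
by rewrite (bigD1 i) //= lerDl; apply: sumr_ge0 => j _; apply: sqr_ge0.
Qed.

Lemma S_span_sum_eq0 c : S (span_sum c) = 0 -> forall i, c i = 0.
Proof.
move=> Sv0 i; apply/normr0_eq0/eqP; rewrite eq_le normr_ge0 andbT.
by rewrite -(ler_pM2r rho_gt0) mul0r (le_trans (abs_coef_le c i)) // Sv0 normr0.
Qed.

Lemma lin_indep_half_diff : lin_indep e.
Proof. by move=> c v0; apply: S_span_sum_eq0; rewrite /span_sum v0 is_linear0. Qed.

Lemma S_injective_on_span : {in span_of e &, injective S}.
Proof.
move=> v w; rewrite !in_setE => -[c ->] [c' ->] Sc_eq.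
have sum_diff : span_sum c - span_sum c' = span_sum (fun i => c i - c' i).
  by rewrite /span_sum -sumrB; apply: eq_bigr => i _; rewrite scalerBl.
have c_eq i : c i = c' i.
  apply/eqP; rewrite -subr_eq0; apply/eqP.
  apply: (S_span_sum_eq0 (c := fun i => c i - c' i)).
  by rewrite -sum_diff is_linearB // Sc_eq subrr.
by apply: eq_bigr => i _; rewrite c_eq.
Qed.

Lemma bernstein_admissible_of_ball r x0 : 0 < r ->
  (forall v, span_of e v -> `|S v| <= r -> F (x0 + v)) -> bernstein_admissible S F n r.
Proof.
move=> r_gt0 ball_in; split=> //; exists e; split; first exact: lin_indep_half_diff.
split; first exact: S_injective_on_span.
exists x0; split=> //; rewrite -[x0]addr0; apply: ball_in.
  by exists (fun=> 0); rewrite big1 // => i _; rewrite scale0r.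
by rewrite is_linear0 // normr0 ltW.
Qed.

Let N_gt0 : 0 < n.+1%:R :> R. Proof. by rewrite ltr0n. Qed.

Lemma scaled_coef_le1 c i :
  `|S (span_sum c)| <= rho / n.+1%:R -> `|n.+1%:R * c i| <= 1.
Proof.
move=> Sv_le; have := le_trans (abs_coef_le c i) Sv_le; rewrite ler_pdivlMr // => ci_le.
rewrite normrM ger0_norm ?ler0n // -(ler_pM2r rho_gt0) mul1r.
by rewrite [_ * `|c i|]mulrC mulrAC.
Qed.

Lemma sum_abs_coef_le1 c :
  `|S (span_sum c)| <= rho / Num.sqrt n.+1%:R -> \sum_(i < n.+1) `|c i| <= 1.
Proof.
move=> Sv_le.
have sum_sqr_le : (\sum_(i < n.+1) c i ^+ 2) * rho ^+ 2 <= n.+1%:R^-1 * rho ^+ 2.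
  apply: le_trans (sum_sqr_coef_le c) _.
  have -> : n.+1%:R^-1 * rho ^+ 2 = (rho / Num.sqrt n.+1%:R) ^+ 2.
    by rewrite expr_div_n sqr_sqrtr ?ler0n // mulrC.
  by rewrite ler_sqr ?nnegrE // divr_ge0 ?sqrtr_ge0 ?ltW.
rewrite ler_pM2r ?exprn_gt0 // in sum_sqr_le.
rewrite -(@ler_sqr _ _ 1) ?nnegrE ?sumr_ge0 //= expr1n.
apply: le_trans (sqr_sum_le _) _.
under eq_bigr do rewrite real_normK ?num_real //.
by rewrite -ler_pdivlMl // mulr1.
Qed.

Lemma bernstein_admissible_convex :
  convex F -> bernstein_admissible S F n (rho / n.+1%:R).
Proof.
move=> F_convex; set mid := fun i : 'I_n.+1 => 2^-1 *: (f i + g i).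
apply: (bernstein_admissible_of_ball (x0 := \sum_(i < n.+1) n.+1%:R^-1 *: mid i)).
  by rewrite divr_gt0.
move=> _ [c ->] Sv_le.
have -> : \sum_(i < n.+1) n.+1%:R^-1 *: mid i + \sum_(i < n.+1) c i *: e i =
    \sum_(i < n.+1) n.+1%:R^-1 *: (mid i + (n.+1%:R * c i) *: e i).
  rewrite -big_split; apply: eq_bigr => i _ /=.
  by rewrite scalerDr (scalerA _ (n.+1%:R * c i)) mulKf ?gt_eqF.
have weights_sum1 : \sum_(i < n.+1) n.+1%:R^-1 = 1 :> R.
  by rewrite sumr_const card_ord -(mulr_natr (n.+1%:R^-1)) mulVf ?gt_eqF.
apply: (convex_sum F_convex) => [i|||i].
- by rewrite invr_ge0 ler0n.
- by rewrite weights_sum1.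
- by rewrite weights_sum1 ltxx.
have [Ff Fg _] := pairs.1 i (ltn_ord i).
exact (convex_midpoint_shift F_convex Ff Fg (scaled_coef_le1 i Sv_le)).
Qed.

Lemma bernstein_admissible_symmetric : convex F -> symmetric_set F ->
  bernstein_admissible S F n (rho / Num.sqrt n.+1%:R).
Proof.
move=> F_convex F_sym.
have Fe i : F (e i).
  have [Ff Fg _] := pairs.1 i (ltn_ord i).
  have := convex_midpoint_shift F_convex (s := 0) Ff (F_sym _ Fg).
  by rewrite scale0r addr0 normr0 ler01; apply.
apply: (bernstein_admissible_of_ball (x0 := 0)); first by rewrite divr_gt0 ?sqrtr_gt0.
move=> _ [c ->] Sv_le; rewrite add0r.
apply: convex_symmetric_sum => //; first exact: convex_symmetric0 (Fe ord0).
exact: sum_abs_coef_le1.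
Qed.

End BernsteinSubspace.

Lemma ereal_le_mul_of_lt (R : realType) (G B : \bar R) (c : R) :
  0 < c -> (0 <= B)%E ->
  (forall rho, 0 < rho -> (rho%:E < G)%E -> ((rho / c)%:E <= B)%E) ->
  (G <= c%:E * B)%E.
Proof.
move=> c_gt0 B_ge0 B_ge; case: B B_ge0 B_ge => [r| |] // r_ge0 B_ge; last first.
  by rewrite mulry gtr0_sg // mul1e leey.
rewrite lee_fin in r_ge0; apply/lee_addgt0Pr => eps eps_gt0; rewrite -EFinM -EFinD.
have cr_ge0 : 0 <= c * r by rewrite mulr_ge0 // ltW.
by rewrite leNgt; apply/negP => /(B_ge _ _); rewrite lee_fin ler_pdivrMr //; lra.
Qed.

Theorem theorem3p5 (R : realType) (X H : completeNormedModType R)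
  (ip : H -> H -> R) (S : X -> H) (F : set X) (n : nat) :
  is_inner_product ip ->
  bounded_linear S ->
  convex F ->
  (gelfand_number S F n <= n.+1%:R%:E * bernstein_number S F n)%E /\
  (symmetric_set F ->
   (gelfand_number S F n <= (Num.sqrt n.+1%:R)%:E * bernstein_number S F n)%E).
Proof.
move=> ip_inner [S_lin S_cont] F_convex.
have bernstein_ge0 : (0 <= bernstein_number S F n)%E by apply: ereal_sup_ubound; right.
have bernstein_ub r : bernstein_admissible S F n r -> (r%:E <= bernstein_number S F n)%E.
  by move=> r_adm; apply: ereal_sup_ubound; left; exists r.
have pairs_of_gelfand rho : (rho%:E < gelfand_number S F n)%E ->
    exists f g, orthogonal_pairs ip S F rho n.+1 f g.
  exact (exists_orthogonal_pairs ip_inner S_lin S_cont).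
split=> [|F_sym].
  apply: ereal_le_mul_of_lt bernstein_ge0 _ => [|rho rho_gt0 /pairs_of_gelfand [f [g pairs]]].
    by rewrite ltr0n.
  exact/bernstein_ub/(bernstein_admissible_convex ip_inner S_lin rho_gt0 pairs).
apply: ereal_le_mul_of_lt bernstein_ge0 _ => [|rho rho_gt0 /pairs_of_gelfand [f [g pairs]]].
  by rewrite sqrtr_gt0 ltr0n.
exact/bernstein_ub/(bernstein_admissible_symmetric ip_inner S_lin rho_gt0 pairs).
Qed.
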